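(* Let $G$ be a connected graph of order $n\geq 3$ and let $g:A\rightarrow B$ be any function. Then $0\leq fix(F_G)\leq 2n-3$. Both bounds are sharp, i.e. each is attained for some connected graph $G$ of order $n\ge 3$ and some function $g$.
   Context: All graphs are simple, finite, nontrivial and connected. For a graph $H$, an automorphism is a bijection $\alpha:V(H)\to V(H)$ with $\alpha(u)\alpha(v)\in E(H)$ iff $uv\in E(H)$. A set $S\subseteq V(H)$ is a fixing set of $H$ if the only automorphism of $H$ fixing every vertex of $S$ is the identity; the fixing number $fix(H)$ is the minimum cardinality of a fixing set of $H$. Functigraph: let $G_1,G_2$ be disjoint copies of a connected graph $G$, with $A=V(G_1)$, $B=V(G_2)$, and let $g:A\to B$ be a function. The functigraph $F_G$ (which depends on $g$) has vertex set $A\cup B$ and edge set $E(G_1)\cup E(G_2)\cup\{ug(u):u\in A\}$. *)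

From mathcomp Require Import all_boot all_fingroup.
Set Implicit Arguments. Unset Strict Implicit. Unset Printing Implicit Defensive.

Definition connected_graph (n : nat) (e : rel 'I_n) : Prop :=
  symmetric e /\ irreflexive e /\ (forall x y : 'I_n, connect e x y).

(* Functigraph F_G: vertices inl a (copy G1, set A) and inr b (copy G2, set B);
   edges of G1, edges of G2, and the edges a -- g(a). *)
Definition functigraph (n : nat) (e : rel 'I_n) (g : 'I_n -> 'I_n)
  : rel ('I_n + 'I_n)%type :=
  fun u v =>
    match u, v with
    | inl a, inl b => e a b
    | inr a, inr b => e a b
    | inl a, inr b => g a == b
    | inr b, inl a => g a == b
    end.

Definition is_aut (T : finType) (r : rel T) (p : {perm T}) : bool :=
  [forall u, forall v, r (p u) (p v) == r u v].

Definition fixing_set (T : finType) (r : rel T) (S : {set T}) : bool :=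
  [forall p : {perm T}, (is_aut r p && [forall x in S, p x == x]) ==> (p == 1%g)].

(* fixing number: minimum cardinality of a fixing set (V itself is one) *)
Definition fix_number (T : finType) (r : rel T) : nat :=
  \big[minn/#|T|]_(S : {set T} | fixing_set r S) #|S|.

From mathcomp Require Import all_boot all_fingroup zify.
Set Implicit Arguments. Unset Strict Implicit. Unset Printing Implicit Defensive.

(* Upper bound: if every two vertices of a set U are told apart by their adjacency
   to some vertex outside U, then an automorphism fixing the complement of U
   permutes U and must be the identity, so V \ U is a fixing set.  In F_G such a U
   of size 3 always exists: if g takes two values g a <> g a', take the B-vertices
   g a, g a' and any third one, told apart by a and a'; if g is constant c, take
   c in A and c, z in B, told apart by a G-neighbour b of c in A and in B.
   Sharpness of 2n - 3: for K_n and constant g, the vertices of A, and those of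
   B other than c, are classes of twins, so a fixing set misses at most one
   vertex of each.  Sharpness of 0: for the path 0 - 1 - ... - (n-1) and g
   sending every vertex to n-1 except g (n-1) = n-2, the B-vertex 0 is the only
   leaf, and from it every automorphism is forced to fix the vertices one by one,
   each being the only unfixed neighbour (of its degree) of a fixed vertex. *)

Lemma geq_bigmin_cond (I : finType) (P : pred I) (F : I -> nat) d j :
  P j -> \big[minn/d]_(i | P i) F i <= F j.
Proof.
move=> Pj; rewrite -big_filter; have : j \in [seq i <- index_enum I | P i].
  by rewrite mem_filter Pj mem_index_enum.
elim: [seq _ <- _ | _] => //= i s IH; rewrite inE big_cons.
by case/predU1P => [<-|/IH]; [exact: geq_minl | apply: leq_trans; exact: geq_minr].
Qed.

Lemma cards3 (T : finType) (x y z : T) :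
  [&& x != y, x != z & y != z] -> #|[set x; y; z]| = 3.
Proof.
by case/and3P=> xy xz yz; rewrite -setUA cardsU1 cards2 yz !inE negb_or xy xz.
Qed.

Section Fixing.
Variables (T : finType) (r : rel T).

Lemma fix_number_le (S : {set T}) : fixing_set r S -> fix_number r <= #|S|.
Proof. exact: geq_bigmin_cond. Qed.

Lemma fix_number_ge k :
  k <= #|T| -> (forall S, fixing_set r S -> k <= #|S|) -> k <= fix_number r.
Proof.
move=> kT kS; apply: (big_ind (fun m => k <= m)) => // a b ka kb.
by rewrite leq_min ka kb.
Qed.

Lemma aut_adj p u v : is_aut r p -> r (p u) (p v) = r u v.
Proof. by move=> /forallP/(_ u)/forallP/(_ v)/eqP. Qed.

Lemma fixing_setP (S : {set T}) :
  reflect (forall p, is_aut r p -> {in S, forall x, p x = x} -> forall x, p x = x)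
          (fixing_set r S).
Proof.
apply: (iffP forallP) => [fixS p autp pS x | fixS p].
  have /implyP/(_ _)/eqP-> := fixS p; first by rewrite perm1.
  by rewrite autp; apply/forallP => y; apply/implyP => /pS ->.
apply/implyP => /andP[autp /forallP pS]; apply/eqP/permP => x; rewrite perm1.
by apply: fixS => // y Sy; apply/eqP; have /implyP := pS y; apply.
Qed.

Lemma fixing_setC_resolving (U : {set T}) :
  (forall u v, u \in U -> v \in U -> u != v ->
     exists2 w, w \notin U & r u w != r v w) ->
  fixing_set r (~: U).
Proof.
move=> resU; apply/fixing_setP => p autp pU x.
have pV y : y \notin U -> p y = y by move=> Uy; apply: pU; rewrite inE.
have [Ux|/pV//] := boolP (x \in U).
have Upx : p x \in U.
  by apply: contraT => /[dup] /pV /perm_inj ->; rewrite Ux.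
apply/eqP; apply: contraT => /(resU _ _ Upx Ux)[w /pV {1}<-].
by rewrite aut_adj // eqxx.
Qed.

Lemma fix_number_le_resolved_triple x y z wxy wxz wyz :
  [&& x != y, x != z & y != z] ->
  [/\ wxy \notin [set x; y; z], wxz \notin [set x; y; z]
    & wyz \notin [set x; y; z]] ->
  [/\ r x wxy != r y wxy, r x wxz != r z wxz & r y wyz != r z wyz] ->
  fix_number r <= #|T| - 3.
Proof.
move=> xyz [Uxy Uxz Uyz] [rxy rxz ryz].
rewrite -(cards3 xyz) -(setCK [set x; y; z]) -cardsCs.
apply/fix_number_le/fixing_setC_resolving => u v.
rewrite !inE -!orbA => /or3P[]/eqP-> /or3P[]/eqP->; rewrite ?eqxx // => _.
all: by [exists wxy | exists wxz | exists wyz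
        | exists wxy; rewrite // eq_sym | exists wxz; rewrite // eq_sym
        | exists wyz; rewrite // eq_sym].
Qed.

Lemma twins_aut u v :
  symmetric r -> irreflexive r ->
  (forall w, w != u -> w != v -> r u w = r v w) -> is_aut r (tperm u v).
Proof.
move=> rC rI twin; apply/'forall_forallP => x y; apply/eqP.
case: tpermP => [->|->|/eqP xu /eqP xv]; case: tpermP => [->|->|/eqP yu /eqP yv];
  by rewrite ?rI // ?twin // ![r x _]rC twin.
Qed.

Lemma card_twins_setD_fixing (X S : {set T}) :
  symmetric r -> irreflexive r ->
  {in X &, forall u v, forall w, w != u -> w != v -> r u w = r v w} ->
  fixing_set r S -> #|X :\: S| <= 1.
Proof.
move=> rC rI twinX fixS; rewrite leqNgt; apply/negP => /card_gt1P[u [v [Xu Xv uv]]].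
move: Xu Xv; rewrite !inE => /andP[Su Xu] /andP[Sv Xv].
have := fixing_setP _ fixS (tperm u v) (twins_aut rC rI (twinX u v Xu Xv)).
have uv_fixS : {in S, forall x, tperm u v x = x}.
  by move=> x Sx; apply: tpermD; [move: Su | move: Sv]; apply: contraNneq => ->.
by move/(_ uv_fixS u)/eqP; rewrite tpermL eq_sym (negbTE uv).
Qed.

Definition nbhd u : {set T} := [set w | r u w].

Lemma card_nbhd_aut p u : is_aut r p -> #|nbhd (p u)| = #|nbhd u|.
Proof.
move=> autp; have -> : nbhd (p u) = p @: nbhd u.
  apply/setP => w; rewrite -[w](permKV p w) mem_imset ?inE ?aut_adj //.
  exact: perm_inj.
exact/card_imset/perm_inj.
Qed.

Lemma aut_fix_unique_deg p w :
  is_aut r p -> (forall v, #|nbhd v| = #|nbhd w| -> v = w) -> p w = w.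
Proof. by move=> autp wU; apply: wU (card_nbhd_aut w autp). Qed.

Lemma aut_fix_by_rank (rk : T -> nat) p :
  (forall w, (forall v, rk v < rk w -> p v = v) -> p w = w) -> forall w, p w = w.
Proof.
move=> step w; have [k] := ubnP (rk w); elim: k w => // k IH w wk.
by apply: step => v vw; apply: IH; apply: leq_trans vw _.
Qed.

Lemma aut_fix_unique_nbr (rk : T -> nat) p u w :
  is_aut r p -> p u = u -> r u w -> (forall v, rk v < rk w -> p v = v) ->
  (forall v, r u v -> rk w <= rk v -> #|nbhd v| = #|nbhd w| -> v = w) ->
  p w = w.
Proof.
move=> autp pu uw low wU; have [pw_low|pw_high] := ltnP (rk (p w)) (rk w).
  by apply: perm_inj; apply: low.
by apply: wU; rewrite ?card_nbhd_aut // -pu aut_adj.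
Qed.

End Fixing.

Lemma connect_neq_nbr (T : finType) (e : rel T) x y :
  connect e x y -> x != y -> exists z, e x z.
Proof.
case/connectP => -[|z s] /= => [_ -> | /andP[xz _] _]; first by rewrite eqxx.
by exists z.
Qed.

Lemma exists_neq2 (T : finType) (a b : T) :
  2 < #|T| -> exists c : T, (c != a) && (c != b).
Proof.
move=> T3; have : 0 < #|~: [set a; b]|.
  by rewrite cardsCs setCK cards2 subn_gt0 (leq_ltn_trans _ T3) //; case: (a != b).
by case/card_gt0P => c; rewrite !inE negb_or; exists c.
Qed.

Lemma inl_eq_inr (A B : eqType) (a : A) (b : B) : (inl a == inr b) = false.
Proof. by []. Qed.

Lemma inr_eq_inl (A B : eqType) (a : A) (b : B) : (inr b == inl a) = false.
Proof. by []. Qed.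

Section Functigraph.
Variables (n : nat) (e : rel 'I_n) (g : 'I_n -> 'I_n).

Lemma functigraph_sym : symmetric e -> symmetric (functigraph e g).
Proof. by move=> eC [a|a] [b|b] //=; rewrite eC. Qed.

Lemma functigraph_irr : irreflexive e -> irreflexive (functigraph e g).
Proof. by move=> eI [a|a] /=. Qed.

Lemma card_functigraph : #|{: 'I_n + 'I_n}| = 2 * n.
Proof. by rewrite card_sum card_ord addnn mul2n. Qed.

Lemma fix_functigraph_le_nonconst a a' :
  2 < n -> g a != g a' -> fix_number (functigraph e g) <= #|{: 'I_n + 'I_n}| - 3.
Proof.
rewrite -{1}(card_ord n) => n3 ga; have [b /andP[ba b0]] := exists_neq2 (g a) (g a') n3.
apply: (@fix_number_le_resolved_triple _ _ (inr (g a)) (inr (g a')) (inr b)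
         (inl a) (inl a) (inl a')); rewrite ?inE /= ?(inj_eq inr_inj) ?eqxx //.
- by apply/and3P; split;
    [exact: ga | rewrite eq_sym; exact: ba | rewrite eq_sym; exact: b0].
- by split; rewrite eq_sym eqb_id;
    [exact: ga | rewrite eq_sym; exact: ba | rewrite eq_sym; exact: b0].
Qed.

Lemma fix_functigraph_le_const c :
  2 < n -> connected_graph e -> (forall a, g a = c) ->
  fix_number (functigraph e g) <= #|{: 'I_n + 'I_n}| - 3.
Proof.
rewrite -{1}(card_ord n) => n3 [_ [eI e_conn]] gc.
have [y /andP[yc _]] := exists_neq2 c c n3.
have [b cb] : exists b, e c b by apply: connect_neq_nbr (e_conn c y) _; rewrite eq_sym.
have bc : b != c by apply: contraTneq cb => ->; rewrite eI.
have [z /andP[zb zc]] := exists_neq2 b c n3.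
apply: (@fix_number_le_resolved_triple _ _ (inl c) (inr z) (inr c)
         (inl b) (inr b) (inl b));
  rewrite ?inE /= ?(inj_eq inr_inj) ?(inj_eq inl_inj) ?gc ?eqxx ?cb ?inl_eq_inr
          ?orbF //.
- split; [exact: bc | | exact: bc].
  by rewrite negb_or; apply/andP; split; [rewrite eq_sym; exact: zb | exact: bc].
- by split; rewrite 1?(eq_sym true) eqb_id eq_sym; [exact: zc | exact: bc | exact: zc].
Qed.

Lemma fix_functigraph_le :
  3 <= n -> connected_graph e -> fix_number (functigraph e g) <= 2 * n - 3.
Proof.
move=> n3 e_conn; rewrite -card_functigraph.
pose a0 : 'I_n := Ordinal (ltn_trans (isT : 0 < 2) n3).
have [/existsP[a ga]|/existsPn g_const] := boolP [exists a, g a != g a0].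
  exact: fix_functigraph_le_nonconst ga.
by apply: (fix_functigraph_le_const (c := g a0)) => // a; move/negPn/eqP: (g_const a).
Qed.
End Functigraph.

Definition complete_rel n : rel 'I_n := fun x y => x != y.

Lemma complete_connected n : connected_graph (@complete_rel n).
Proof.
split; first by move=> x y; rewrite /complete_rel eq_sym.
split; first by move=> x; rewrite /complete_rel eqxx.
by move=> x y; have [->|xy] := eqVneq x y; [exact: connect0 | exact: connect1].
Qed.

Lemma fix_functigraph_complete_const n (c : 'I_n) :
  2 * n - 3 <= fix_number (functigraph (@complete_rel n) (fun=> c)).
Proof.
set r := functigraph _ _.
have rC : symmetric r by apply: functigraph_sym; case: (complete_connected n).
have rI : irreflexive r by apply/functigraph_irr => x; rewrite /complete_rel eqxx.
apply: fix_number_ge => [|S fixS]; first by rewrite card_functigraph leq_subr.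
pose X : {set 'I_n + 'I_n} := [set v | if v is inl _ then true else false].
pose Y : {set 'I_n + 'I_n} := [set v | if v is inr b then b != c else false].
have XS : #|X :\: S| <= 1.
  apply: card_twins_setD_fixing fixS => // -[a|a] [a'|a'] //;
    rewrite !inE // => _ _ [x|x] //=.
  by rewrite !(inj_eq inl_inj) /complete_rel ![_ == x]eq_sym => -> ->.
have YS : #|Y :\: S| <= 1.
  apply: card_twins_setD_fixing fixS => // -[b|b] [b'|b'] //;
    rewrite !inE // => cb cb' [x|x] /=.
    by rewrite ![c == _]eq_sym (negbTE cb) (negbTE cb').
  by rewrite !(inj_eq inr_inj) /complete_rel ![_ == x]eq_sym => -> ->.
have cover : ~: S \subset inr c |: ((X :\: S) :|: (Y :\: S)).
  apply/subsetP => -[a|b]; rewrite !inE => ->; rewrite ?orbT //=.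
  by rewrite (inj_eq inr_inj) orbN.
have : #|~: S| <= 3.
  apply: leq_trans (subset_leq_card cover) _; rewrite cardsU1.
  apply: leq_add (leq_b1 _) (leq_trans (leq_card_setU _ _).1 _).
  exact: leq_add XS YS.
by have := cardsC S; rewrite card_functigraph; lia.
Qed.

Definition path_rel n : rel 'I_n := fun i j => (i.+1 == j) || (j.+1 == i).

Lemma path_connected n : connected_graph (@path_rel n).
Proof.
have pC : symmetric (@path_rel n) by move=> i j; rewrite /path_rel orbC.
split=> //; split=> [i|]; first by rewrite /path_rel; lia.
have up (i j : 'I_n) : i <= j -> connect (@path_rel n) i j.
  have [k] := ubnP (j - i); elim: k j => // k IH j jk ij.
  have [->|neq_ij] := eqVneq i j; first exact: connect0.
  have ltj : j.-1 < n by have := ltn_ord j; lia.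
  have ij' : i < j by rewrite ltn_neqAle neq_ij.
  have pj : path_rel (Ordinal ltj) j by rewrite /path_rel /=; lia.
  by apply: connect_trans (IH (Ordinal ltj) _ _) (connect1 pj) => /=; lia.
move=> i j; have [/up //|/ltnW/up] := leqP i j.
by rewrite (sym_connect_sym pC).
Qed.

Section RigidFunctigraph.
Variable m : nat.
Local Notation n := m.+3.

Definition tail_map (i : 'I_n) : 'I_n := if i < m.+2 then ord_max else inord m.+1.

Local Notation R := (functigraph (@path_rel n) tail_map).

(* The order in which automorphisms are forced to fix vertices: B from its leaf 0
   upwards, then A from n-1 downwards; the two vertices of rank n-1 are told
   apart by their degrees. *)
Definition peel_rank (v : 'I_n + 'I_n) : nat :=
  match v with inl a => m.+2 + (m.+2 - a) | inr b => b end.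

Lemma tail_mapE i (k : 'I_n) :
  (tail_map i == k) = (k == (if i < m.+2 then m.+2 else m.+1) :> nat).
Proof. by rewrite /tail_map -val_eqE eq_sym; case: ifP => _; rewrite /= ?inordK. Qed.

Lemma nbhd_leaf : nbhd R (inr ord0) \subset [set inr (inord 1)].
Proof.
apply/subsetP => -[a|b]; rewrite !inE /= ?tail_mapE; first by case: ifP.
by rewrite (inj_eq inr_inj) -val_eqE /= inordK // /path_rel /=; lia.
Qed.

Lemma nbhd_gt1 v : v != inr ord0 -> 1 < #|nbhd R v|.
Proof.
move=> v0; apply/card_gt1P; case: v v0 => [a|b] v0.
  pose a' : 'I_n := inord (if a < m.+2 then a.+1 else a.-1).
  exists (inr (tail_map a)), (inl a'); rewrite !inE /= eqxx.
  by split=> //; rewrite /path_rel inordK; case: ifP; have := ltn_ord a; lia.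
have b_pos : 0 < b by move: v0; rewrite (inj_eq inr_inj) -val_eqE /=; lia.
exists (inr (inord b.-1)), (if b < m.+2 then inr (inord b.+1) else inl ord0).
have := ltn_ord b; case: ifP => bm bn; rewrite !inE /= ?tail_mapE ?(inj_eq inr_inj)
  -?val_eqE /path_rel /= ?inordK //; try split; lia.
Qed.

Lemma card_nbhd_inl_top : #|nbhd R (inl ord_max)| <= 2.
Proof.
apply: leq_trans (_ : #|[set inl (inord m.+1); inr (inord m.+1)]| <= 2); last first.
  by rewrite cards2.
apply/subset_leq_card/subsetP => -[a|b]; rewrite !inE /= ?tail_mapE ?ltnn.
  by rewrite inl_eq_inr orbF (inj_eq inl_inj) -val_eqE /path_rel /= inordK //;
    have := ltn_ord a; lia.
move=> /eqP b_top; rewrite (_ : b = inord m.+1) //.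
by apply: val_inj; rewrite /= inordK.
Qed.

Lemma card_nbhd_inr_top : 2 < #|nbhd R (inr ord_max)|.
Proof.
pose N : {set 'I_n + 'I_n} := [set inl ord0; inl (inord 1); inr (inord m.+1)].
have three : #|N| = 3.
  by apply: cards3; rewrite (inj_eq inl_inj) -val_eqE /= inordK // !inl_eq_inr.
rewrite -three /N; apply/subset_leq_card/subsetP => v.
by rewrite !inE -!orbA => /or3P[]/eqP->;
  rewrite /= ?tail_mapE /path_rel /= ?inordK //= ?eqxx ?orbT.
Qed.

Section Automorphism.
Variable p : {perm 'I_n + 'I_n}.
Hypothesis autp : is_aut R p.
Local Notation fixed_below w := (forall v, peel_rank v < peel_rank w -> p v = v).

Lemma aut_fix_leaf : p (inr ord0) = inr ord0.
Proof.
apply: (aut_fix_unique_deg autp) => v.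
have := subset_leq_card nbhd_leaf; rewrite cards1.
by have [//|/nbhd_gt1] := eqVneq v (inr ord0); lia.
Qed.

Lemma aut_fix_inr (b : 'I_n) : 0 < b < m.+2 -> fixed_below (inr b) -> p (inr b) = inr b.
Proof.
move=> /andP[b_pos b_lt] low.
have b1 : b.-1 < n by have := ltn_ord b; lia.
apply: (aut_fix_unique_nbr (rk := peel_rank) (u := inr (inord b.-1)) autp) => //.
- by apply: low; rewrite /= inordK //; lia.
- by rewrite /= /path_rel inordK //; lia.
move=> [a|b'] /=; first by rewrite tail_mapE inordK //; case: ifP; lia.
rewrite /path_rel inordK // => bb' le_bb' _; congr inr; apply: val_inj => /=; lia.
Qed.

Lemma aut_fix_inl (a : 'I_n) : a < m.+2 -> fixed_below (inl a) -> p (inl a) = inl a.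
Proof.
move=> a_lt low; have a1 : a.+1 < n by [].
apply: (aut_fix_unique_nbr (rk := peel_rank) (u := inl (inord a.+1)) autp) => //.
- by apply: low; rewrite /= inordK //; lia.
- by rewrite /= /path_rel inordK //; lia.
move=> [a'|b] /=; last by have := ltn_ord b; lia.
rewrite /path_rel inordK // => aa' le_aa' _; congr inl; apply: val_inj => /=.
by have := ltn_ord a'; lia.
Qed.

Lemma aut_fix_top w :
  w \in [set inl ord_max; inr ord_max] -> fixed_below w -> p w = w.
Proof.
have top_rank v : v \in [set inl ord_max; inr ord_max] -> peel_rank v = m.+2.
  by rewrite !inE => /orP[]/eqP->; rewrite /= ?subnn ?addn0.
move=> w_top low; have w_rank := top_rank w w_top.
apply: (aut_fix_unique_nbr (rk := peel_rank) (u := inr (inord m.+1)) autp) => //.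
- by apply: low; rewrite w_rank /= inordK.
- move: w_top; rewrite !inE => /orP[]/eqP-> /=;
    by rewrite ?tail_mapE /path_rel ?inordK //= ?ltnn ?eqxx ?orbT.
move=> v uv; rewrite w_rank => v_rank.
have v_top : v \in [set inl ord_max; inr ord_max].
  case: v uv v_rank => [a|b] /=; rewrite !inE ?inl_eq_inr ?inr_eq_inl ?orbF /=.
    rewrite tail_mapE inordK // (inj_eq inl_inj) -val_eqE /=.
    by case: ifP; have := ltn_ord a; lia.
  rewrite (inj_eq inr_inj) -val_eqE /path_rel inordK //=.
  by have := ltn_ord b; lia.
have := card_nbhd_inl_top; have := card_nbhd_inr_top.
move: v_top w_top; rewrite !inE => /orP[]/eqP-> /orP[]/eqP-> // ? ? deg.
all: by exfalso; lia.
Qed.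
End Automorphism.

Lemma rigid_functigraph : fixing_set R set0.
Proof.
apply/fixing_setP => p autp _; apply: (aut_fix_by_rank (rk := peel_rank)) => -[a|b] low.
  have [a_lt|a_top] := ltnP a m.+2; first exact: aut_fix_inl.
  apply: aut_fix_top => //; rewrite !inE (inj_eq inl_inj) -val_eqE /=.
  by have := ltn_ord a; lia.
have [b0|b_pos] := posnP b.
  by rewrite (_ : b = ord0) ?aut_fix_leaf //; apply: val_inj.
have [b_lt|b_top] := ltnP b m.+2; first by apply: aut_fix_inr; rewrite ?b_pos.
apply: aut_fix_top => //; rewrite !inE inr_eq_inl (inj_eq inr_inj) -val_eqE /=.
by have := ltn_ord b; lia.
Qed.

End RigidFunctigraph.

Theorem proposition2p5 :
  (forall (n : nat) (e : rel 'I_n) (g : 'I_n -> 'I_n),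
      3 <= n -> connected_graph e ->
      0 <= fix_number (functigraph e g) <= 2 * n - 3)
  /\
  (forall n : nat, 3 <= n ->
      (exists (e : rel 'I_n) (g : 'I_n -> 'I_n),
          connected_graph e /\ fix_number (functigraph e g) = 0)
      /\
      (exists (e : rel 'I_n) (g : 'I_n -> 'I_n),
          connected_graph e /\ fix_number (functigraph e g) = 2 * n - 3)).
Proof.
split=> [n e g n3 e_conn | n n3]; first exact: fix_functigraph_le.
split.
  case: n n3 => [|[|[|m]]] // _; exists (@path_rel m.+3), (@tail_map m).
  split; first exact: path_connected.
  apply/eqP; rewrite -leqn0.
  by have := fix_number_le (rigid_functigraph m); rewrite cards0.
pose c : 'I_n := Ordinal (ltn_trans (isT : 0 < 2) n3).
exists (@complete_rel n), (fun=> c); split; first exact: complete_connected.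
apply/eqP; rewrite eqn_leq fix_functigraph_complete_const andbT.
exact: fix_functigraph_le (complete_connected n).
Qed.
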